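(* Let $n\ge 2$ be an integer, $\omega>0$ and $c>0$, and set $\mu_j=\omega^2+c\,(j-1)$ for $j=1,\dots,n$. Define $$\beta_j=-\sqrt{\mu_j}+\frac{1}{n-1}\sum_{k=1}^n\sqrt{\mu_k},\qquad j=1,\dots,n.$$ If $$c<\frac{2(2n-3)\,\omega^2}{(n-1)(n^2-3n+4)},$$ then $\beta_j>0$ for all $j=1,\dots,n$.
   Context: The $\mu_j$ are the eigenvalues of the interaction matrix $A=\omega^2 I+cM_{\rm K}$, where $M_{\rm K}$ (the Krawtchouk matrix) has eigenvalues $\lambda_j=j-1$; $c$ is the coupling strength. *)

From mathcomp Require Import all_boot all_order all_algebra.
Set Implicit Arguments. Unset Strict Implicit. Unset Printing Implicit Defensive.
Import Order.TTheory GRing.Theory Num.Theory.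
Local Open Scope ring_scope.

(* Indices j = 1..n of the paper are represented by i : 'I_n with j = i + 1,
   so mu_j = omega^2 + c (j - 1) = omega^2 + c * i. *)
Definition mu (R : rcfType) (omega c : R) (n : nat) (i : 'I_n) : R :=
  omega ^+ 2 + c * i%:R.

Definition beta (R : rcfType) (omega c : R) (n : nat) (i : 'I_n) : R :=
  - Num.sqrt (mu omega c i)
  + (n.-1)%:R^-1 * \sum_(k < n) Num.sqrt (mu omega c k).

(* Since [mu] is increasing in [j], the smallest [beta] is [beta_n = T / (n - 1) - S], where
   [T] is the sum of all [sqrt mu_k] and [S = sqrt mu_n].  Rationalising,
   [S - sqrt mu_k = c (n - 1 - k) / (S + sqrt mu_k) <= c (n - 1 - k) / (S + omega)], so
   [n S - T <= c n (n - 1) / (2 (S + omega))], while [S (S + omega) >= 2 omega^2 + c (n - 1)].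
   Hence [n S - T < S] as soon as [c (n - 1) (n - 2) < 4 omega^2], which the hypothesis on [c]
   implies. *)
From mathcomp Require Import all_boot all_order all_algebra.
From mathcomp Require Import ring lra.

Set Implicit Arguments.
Unset Strict Implicit.
Unset Printing Implicit Defensive.
Import Order.TTheory GRing.Theory Num.Theory.
Local Open Scope ring_scope.

Lemma sum_natr_ord (R : comNzRingType) (n : nat) :
  (\sum_(k < n) (k%:R : R)) * 2 = n%:R * (n%:R - 1).
Proof.
elim: n => [|n IHn]; first by rewrite big_ord0 mul0r mul0r.
by rewrite big_ord_recr /= mulrDl IHn -addn1 natrD; ring.
Qed.

Lemma sqrt_gap_le (R : rcfType) (a b w : R) :
  0 <= a -> a <= b -> w <= Num.sqrt a ->
  (Num.sqrt b - Num.sqrt a) * (Num.sqrt b + w) <= b - a.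
Proof.
move=> a_ge0 le_ab le_w.
have le_sqrt : Num.sqrt a <= Num.sqrt b by rewrite ler_sqrt // (le_trans a_ge0).
rewrite -[b in _ <= b - _]sqr_sqrtr ?(le_trans a_ge0) // -[a in _ <= _ - a]sqr_sqrtr //.
by rewrite subr_sqr ler_wpM2l ?subr_ge0 ?lerD2l.
Qed.

Lemma coupling_bound_weaken (R : realFieldType) (N omega c : R) :
  2 <= N -> 0 <= c ->
  c < (2 * (2 * N - 3) * omega ^+ 2) / ((N - 1) * (N ^+ 2 - 3 * N + 4)) ->
  c * (N - 1) * (N - 2) < 4 * omega ^+ 2.
Proof.
move=> N_ge2 c_ge0.
have den_gt0 : 0 < (N - 1) * (N ^+ 2 - 3 * N + 4).
  apply: mulr_gt0; first lra.
  have -> : N ^+ 2 - 3 * N + 4 = (N - 2) * (N - 1) + 2 by ring.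
  by rewrite ltr_wpDl ?mulr_ge0 //; lra.
rewrite ltr_pdivlMr // => lt_c.
(* [2 (N^2 - 3N + 4) = (N - 2) (2N - 3) + (N + 2)] and [2N - 3 > 0]. *)
have slack : 0 <= c * (N - 1) * (N + 2) by rewrite !mulr_ge0 //; lra.
rewrite -(ltr_pM2r (_ : 0 < 2 * N - 3)); last lra.
nra.
Qed.

Section SqrtMu.

Variables (R : rcfType) (omega c : R) (n : nat).
Hypotheses (omega_ge0 : 0 <= omega) (c_ge0 : 0 <= c).

Local Notation N := (n%:R : R).
Local Notation S := (Num.sqrt (omega ^+ 2 + c * (N - 1))).
Local Notation T := (\sum_(k < n) Num.sqrt (mu omega c k)).

Lemma mu_ge0 (k : 'I_n) : 0 <= mu omega c k.
Proof. by rewrite addr_ge0 ?sqr_ge0 ?mulr_ge0. Qed.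

Lemma mu_le_last (k : 'I_n) : mu omega c k <= omega ^+ 2 + c * (N - 1).
Proof.
by rewrite lerD2l ler_wpM2l // lerBrDr natr1 ler_nat.
Qed.

Lemma omega_le_sqrt_mu (k : 'I_n) : omega <= Num.sqrt (mu omega c k).
Proof.
rewrite -[omega in omega <= _]ger0_norm // -sqrtr_sqr ler_sqrt ?mu_ge0 //.
by rewrite lerDl mulr_ge0.
Qed.

Lemma sqrt_mu_le_last (k : 'I_n) : Num.sqrt (mu omega c k) <= S.
Proof. by rewrite ler_sqrt ?mu_le_last // (le_trans (mu_ge0 k) (mu_le_last k)). Qed.

Lemma sum_sqrt_mu_gap : (N * S - T) * (S + omega) <= c * N * (N - 1) / 2.
Proof.
have gap (k : 'I_n) : (S - Num.sqrt (mu omega c k)) * (S + omega)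
             <= c * (N - 1) - c * k%:R.
  have := sqrt_gap_le (mu_ge0 k) (mu_le_last k) (omega_le_sqrt_mu k).
  by rewrite /mu opprD addrACA subrr add0r.
have -> : (N * S - T) * (S + omega) =
          \sum_(k < n) (S - Num.sqrt (mu omega c k)) * (S + omega).
  by rewrite -mulr_suml sumrB sumr_const card_ord mulr_natl.
apply: (le_trans (ler_sum _ (fun k _ => gap k))).
rewrite sumrB sumr_const card_ord -mulr_sumr -mulr_natl.
have -> : \sum_(k < n) (k%:R : R) = N * (N - 1) / 2.
  by rewrite -(sum_natr_ord R n) mulfK ?pnatr_eq0.
by rewrite le_eqVlt; apply/predU1l; field.
Qed.

Lemma sum_sqrt_mu_gt (n_gt0 : (0 < n)%N)
    (cond : c * (N - 1) * (N - 2) < 4 * omega ^+ 2) :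
  (N - 1) * S < T.
Proof.
have S2 : S ^+ 2 = omega ^+ 2 + c * (N - 1).
  by rewrite sqr_sqrtr // addr_ge0 ?sqr_ge0 ?mulr_ge0 ?subr_ge0 ?ler1n.
have omega_le_S : omega <= S.
  exact: le_trans (omega_le_sqrt_mu (Ordinal n_gt0)) (sqrt_mu_le_last _).
have S_lower : 2 * omega ^+ 2 + c * (N - 1) <= S * (S + omega).
  have : omega * omega <= S * omega by rewrite ler_wpM2r.
  by rewrite [S * (_ + _)]mulrDr -!expr2 S2; lra.
suff : N * S - T < S by lra.
rewrite ltNge; apply/negP => le_S.
have := le_trans S_lower (le_trans (ler_wpM2r _ le_S) sum_sqrt_mu_gap).
have -> : c * N * (N - 1) / 2 = c * (N - 1) + c * (N - 1) * (N - 2) / 2 by field.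
move=> /(_ (addr_ge0 (sqrtr_ge0 _) omega_ge0)).
by move: cond; lra.
Qed.

Lemma beta_gt0 (n_ge2 : (2 <= n)%N)
    (cond : c * (N - 1) * (N - 2) < 4 * omega ^+ 2) (j : 'I_n) :
  0 < beta omega c j.
Proof.
have n_gt0 : (0 < n)%N by exact: ltnW.
have N1_gt0 : 0 < N - 1 by rewrite subr_gt0 ltr1n.
rewrite /beta -subn1 natrB // addrC subr_gt0 ltr_pdivlMl //.
apply: le_lt_trans (sum_sqrt_mu_gt n_gt0 cond).
by rewrite ler_wpM2l ?sqrt_mu_le_last ?ltW.
Qed.

End SqrtMu.

Theorem proposition3 (R : rcfType) (n : nat) (omega c : R) :
  (2 <= n)%N -> 0 < omega -> 0 < c ->
  c < (2 * (2 * n%:R - 3) * omega ^+ 2)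
      / ((n%:R - 1) * (n%:R ^+ 2 - 3 * n%:R + 4)) ->
  forall j : 'I_n, 0 < beta omega c j.
Proof.
move=> n_ge2 omega_gt0 c_gt0 lt_c.
have N_ge2 : 2 <= n%:R :> R by rewrite (ler_nat R 2 n).
have cond := coupling_bound_weaken N_ge2 (ltW c_gt0) lt_c.
exact: (beta_gt0 (ltW omega_gt0) (ltW c_gt0) n_ge2 cond).
Qed.
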